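(* Assume the standing assumptions (A1)–(A3). Then the optimal value of \[ (\overline{Aff})\quad\min_{x,\lambda,Y}\ c^Tx+\lambda\ \ \text{s.t.}\ \ x\in\mathcal X,\ \ \lambda g_1g_1^T-\tfrac12G(x)+\tfrac12H(Y)\in\mathrm{COP}(\widehat{\mathcal U}\times\mathbb R^m_+), \] with $\lambda\in\mathbb R$, $Y\in\mathbb R^{n_2\times k}$, equals $v^*_{Aff}$.
   Context: Data: $A\in\mathbb R^{m\times n_1}$, $B\in\mathbb R^{m\times n_2}$, $c\in\mathbb R^{n_1}$, $d\in\mathbb R^{n_2}$, $F\in\mathbb R^{m\times k}$, $\mathcal X\subseteq\mathbb R^{n_1}$ closed convex. $\widehat{\mathcal U}\subseteq\mathbb R_+\times\mathbb R^{k-1}$ is a closed, convex, full-dimensional cone and $\mathcal U:=\{u\in\widehat{\mathcal U}: u_1=1\}$, assumed nonempty and compact. $e_1\in\mathbb R^k$ first standard basis vector, $g_1:=(e_1;0)\in\mathbb R^{k+m}$. (RLP): $v^*_{RLP}:=\inf\{c^Tx+\sup_{u\in\mathcal U}d^Ty(u)\}$ over $x\in\mathcal X$ and maps $y:\mathcal U\to\mathbb R^{n_2}$ with $Ax+By(u)\ge Fu$ for all $u\in\mathcal U$. Standing assumptions: (A1) $\mathcal X,\widehat{\mathcal U}$ computationally tractable; (A2) (RLP) feasible; (A3) $v^*_{RLP}$ finite. The affine-policy value is $v^*_{Aff}:=\inf\{c^Tx+\sup_{u\in\mathcal U}d^TYu\}$ over $x\in\mathcal X$, $Y\in\mathbb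 R^{n_2\times k}$ with $Ax+BYu\ge Fu$ for all $u\in\mathcal U$. $G(x):=\begin{pmatrix}0&(F-Axe_1^T)^T\\ F-Axe_1^T&0\end{pmatrix}$, $H(Y):=\begin{pmatrix}-e_1d^TY-Y^Tde_1^T&(BY)^T\\ BY&0\end{pmatrix}$, both in $\mathcal S^{k+m}$. $\mathrm{COP}(\mathcal K):=\{M\in\mathcal S^n: z^TMz\ge0\ \forall z\in\mathcal K\}$ for a closed convex cone $\mathcal K\subseteq\mathbb R^n$. *)

From Stdlib Require Import Reals.
From mathcomp Require Import all_boot.
Set Implicit Arguments. Unset Strict Implicit.

Local Open Scope R_scope.

Definition vec (n : nat) := 'I_n -> R.
Definition mat (m n : nat) := 'I_m -> 'I_n -> R.

Definition sumR (n : nat) (f : 'I_n -> R) : R := \big[Rplus/0]_(i < n) f i.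
Definition dot (n : nat) (x y : vec n) : R := sumR (fun i => x i * y i).
Definition mv (m n : nat) (A : mat m n) (x : vec n) : vec m :=
  fun i => sumR (fun j => A i j * x j).
Definition mm (m n p : nat) (A : mat m n) (B : mat n p) : mat m p :=
  fun i l => sumR (fun j => A i j * B j l).
Definition trm (m n : nat) (A : mat m n) : mat n m := fun j i => A i j.

Definition vge (n : nat) (x y : vec n) : Prop := forall i, y i <= x i.

(* first standard basis vector e_1 of R^k (index 0) *)
Definition e1 (k : nat) : vec k := fun i => if (val i == 0)%N then 1 else 0.

Definition quad (n : nat) (M : mat n n) (z : vec n) : R := dot z (mv M z).
Definition COP (n : nat) (K : vec n -> Prop) (M : mat n n) : Prop :=
  forall z, K z -> 0 <= quad M z.

Definition vconv (n : nat) (s : nat -> vec n) (u : vec n) : Prop :=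
  forall i, Un_cv (fun p => s p i) (u i).
Definition vclosed (n : nat) (S : vec n -> Prop) : Prop :=
  forall (s : nat -> vec n) u, (forall p, S (s p)) -> vconv s u -> S u.
Definition vbounded (n : nat) (S : vec n -> Prop) : Prop :=
  exists M, forall u, S u -> forall i, Rabs (u i) <= M.
(* compact subsets of R^n = closed and bounded (Heine-Borel) *)
Definition vcompact (n : nat) (S : vec n -> Prop) : Prop :=
  vclosed S /\ vbounded S.
Definition vconvex (n : nat) (S : vec n -> Prop) : Prop :=
  forall u v t, S u -> S v -> 0 <= t <= 1 ->
    S (fun i => t * u i + (1 - t) * v i).
Definition vcone (n : nat) (S : vec n -> Prop) : Prop :=
  forall u t, S u -> 0 <= t -> S (fun i => t * u i).
Definition vfull_dim (n : nat) (S : vec n -> Prop) : Prop :=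
  exists u eps, 0 < eps /\ forall v, (forall i, Rabs (v i - u i) < eps) -> S v.

(* extended reals and the (extended-valued) infimum of a set of reals,
   with the convention inf(empty) = +infinity *)
Inductive ER : Type := Fin (r : R) | PInf | NInf.
Definition is_inf (S : R -> Prop) (v : ER) : Prop :=
  match v with
  | Fin r => (forall x, S x -> r <= x) /\
             (forall r', (forall x, S x -> r' <= x) -> r' <= r)
  | PInf => forall x, ~ S x
  | NInf => forall M, exists x, S x /\ x < M
  end.

Definition Uset (k : nat) (Uhat : vec k -> Prop) (u : vec k) : Prop :=
  Uhat u /\ forall i : 'I_k, val i = 0%N -> u i = 1.

(* (RLP): objective values c^T x + sup_{u in U} d^T y(u) over feasible (x, y);
   points where the sup is +infinity contribute the value +infinity and are
   hence omitted from the value set. *)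
Definition RLP_vals (m n1 n2 k : nat) (A : mat m n1) (B : mat m n2)
  (c : vec n1) (d : vec n2) (F : mat m k) (X : vec n1 -> Prop)
  (Uhat : vec k -> Prop) (v : R) : Prop :=
  exists (x : vec n1) (y : vec k -> vec n2) (s : R),
    X x /\
    (forall u, Uset Uhat u -> vge (fun i => mv A x i + mv B (y u) i) (mv F u)) /\
    is_lub (fun t => exists u, Uset Uhat u /\ t = dot d (y u)) s /\
    v = dot c x + s.

Definition RLP_feasible (m n1 n2 k : nat) (A : mat m n1) (B : mat m n2)
  (F : mat m k) (X : vec n1 -> Prop) (Uhat : vec k -> Prop) : Prop :=
  exists (x : vec n1) (y : vec k -> vec n2),
    X x /\
    forall u, Uset Uhat u -> vge (fun i => mv A x i + mv B (y u) i) (mv F u).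

Definition Aff_vals (m n1 n2 k : nat) (A : mat m n1) (B : mat m n2)
  (c : vec n1) (d : vec n2) (F : mat m k) (X : vec n1 -> Prop)
  (Uhat : vec k -> Prop) (v : R) : Prop :=
  exists (x : vec n1) (Y : mat n2 k) (s : R),
    X x /\
    (forall u, Uset Uhat u -> vge (fun i => mv A x i + mv B (mv Y u) i) (mv F u)) /\
    is_lub (fun t => exists u, Uset Uhat u /\ t = dot d (mv Y u)) s /\
    v = dot c x + s.

(* block matrices in S^{k+m}: index i : 'I_(k+m) splits as inl ('I_k) / inr ('I_m) *)
Definition Wmat (m n1 k : nat) (A : mat m n1) (F : mat m k) (x : vec n1) : mat m k :=
  fun b a => F b a - mv A x b * e1 a.

Definition Gmat (m n1 k : nat) (A : mat m n1) (F : mat m k) (x : vec n1)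
  : mat (k + m) (k + m) :=
  fun i j =>
    match split i, split j with
    | inl a, inr b => trm (Wmat A F x) a b
    | inr b, inl a => Wmat A F x b a
    | _, _ => 0
    end.

Definition Hmat (m n2 k : nat) (B : mat m n2) (d : vec n2) (Y : mat n2 k)
  : mat (k + m) (k + m) :=
  let dY : vec k := fun a => sumR (fun j => d j * Y j a) in   (* (d^T Y)^T = Y^T d *)
  let BY := mm B Y in
  fun i j =>
    match split i, split j with
    | inl a, inl a' => - (e1 a * dY a') - dY a * e1 a'
    | inl a, inr b => trm BY a b
    | inr b, inl a => BY b a
    | inr _, inr _ => 0
    end.

(* g1 g1^T with g1 = (e1; 0) *)
Definition g1g1T (m k : nat) : mat (k + m) (k + m) :=
  fun i j =>
    match split i, split j with
    | inl a, inl a' => e1 a * e1 a'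
    | _, _ => 0
    end.

Definition UhatRplus (m k : nat) (Uhat : vec k -> Prop) (z : vec (k + m)) : Prop :=
  Uhat (fun a => z (lshift m a)) /\ forall b : 'I_m, 0 <= z (rshift k b).

Definition AffBar_vals (m n1 n2 k : nat) (A : mat m n1) (B : mat m n2)
  (c : vec n1) (d : vec n2) (F : mat m k) (X : vec n1 -> Prop)
  (Uhat : vec k -> Prop) (v : R) : Prop :=
  exists (x : vec n1) (lam : R) (Y : mat n2 k),
    X x /\
    COP (@UhatRplus m k Uhat)
      (fun i j => lam * @g1g1T m k i j - / 2 * Gmat A F x i j + / 2 * Hmat B d Y i j) /\
    v = dot c x + lam.

(** The matrix of (Aff-bar) is built so that, writing z = (u; w) with u in the
    cone and w >= 0, its quadratic form is
      u_1^2 lam - u_1 d^T Y u + w^T (u_1 A x + B Y u - F u).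
    Every u in the cone is u_1 u' with u' in U (if u_1 = 0 then u = 0, since U
    is bounded and nonempty), so copositivity says exactly that
    lam >= d^T Y u' and A x + B Y u' >= F u' for all u' in U: (x, Y) is a
    robustly feasible affine policy whose worst-case cost is at most lam.
    Hence both problems range over the same (x, Y), and the best lam is the
    worst-case cost, so the infima agree. *)
From HB Require Import structures.
From Stdlib Require Import Reals Lra FunctionalExtensionality.
From mathcomp Require Import all_boot.
Local Open Scope R_scope.
Set Implicit Arguments. Unset Strict Implicit.

Lemma Rplus_assoc_law : associative Rplus. Proof. by move=> *; ring. Qed.
Lemma Rplus_comm_law : commutative Rplus. Proof. by move=> *; ring. Qed.
Lemma Rplus_0_l_law : left_id 0 Rplus. Proof. by move=> *; ring. Qed.
HB.instance Definition _ :=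
  Monoid.isComLaw.Build R 0 Rplus Rplus_assoc_law Rplus_comm_law Rplus_0_l_law.

Lemma sumR_ext (n : nat) (f g : 'I_n -> R) : (forall i, f i = g i) -> sumR f = sumR g.
Proof. by move=> fg; apply: eq_bigr => i _. Qed.
Arguments sumR_ext {n} f g.

Lemma sumRD (n : nat) (f g : 'I_n -> R) : sumR (fun i => f i + g i) = sumR f + sumR g.
Proof. exact: big_split. Qed.

Lemma sumRB (n : nat) (f g : 'I_n -> R) : sumR (fun i => f i - g i) = sumR f - sumR g.
Proof. by apply: (Rplus_eq_reg_r (sumR g)); rewrite -sumRD (sumR_ext _ f) => [|i /=]; ring. Qed.

Lemma sumRZl (n : nat) a (f : 'I_n -> R) : sumR (fun i => a * f i) = a * sumR f.
Proof.
symmetry; apply: (big_endo (fun x => a * x)); last by rewrite Rmult_0_r.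
by move=> x y; rewrite Rmult_plus_distr_l.
Qed.

Lemma sumR0 (n : nat) : sumR (fun _ : 'I_n => 0) = 0.
Proof. exact: big1. Qed.

Lemma sumR_ge0 (n : nat) (f : 'I_n -> R) : (forall i, 0 <= f i) -> 0 <= sumR f.
Proof. by move=> f_ge0; rewrite /sumR; apply: (big_ind (fun x => 0 <= x)) => // *; lra. Qed.

Lemma sumR_delta (n : nat) (f : 'I_n -> R) j : (forall i, i <> j -> f i = 0) -> sumR f = f j.
Proof. by move=> fN0; rewrite /sumR (bigD1 j) //= big1 ?Rplus_0_r // => i /eqP /fN0. Qed.

Lemma sumR_exchange (n p : nat) (f : 'I_n -> 'I_p -> R) :
  sumR (fun i => sumR (fun j => f i j)) = sumR (fun j => sumR (fun i => f i j)).
Proof. exact: exchange_big. Qed.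

Lemma sumR_split_ord (n p : nat) (f : 'I_(n + p) -> R) :
  sumR f = sumR (fun a => f (lshift p a)) + sumR (fun b => f (rshift n b)).
Proof. exact: big_split_ord. Qed.

Lemma sumR2D (n p : nat) (f g : 'I_n -> 'I_p -> R) :
  sumR (fun i => sumR (fun j => f i j + g i j)) =
  sumR (fun i => sumR (fun j => f i j)) + sumR (fun i => sumR (fun j => g i j)).
Proof. by rewrite -sumRD; apply: sumR_ext => i /=; rewrite sumRD. Qed.

Lemma sumR_outer (n p : nat) c (f : 'I_n -> R) (g : 'I_p -> R) :
  sumR (fun i => sumR (fun j => c * f i * g j)) = c * sumR f * sumR g.
Proof.
rewrite (Rmult_comm (c * _)) -(sumRZl c f) -sumRZl; apply: sumR_ext => i /=.
by rewrite (Rmult_comm (sumR g)) -sumRZl; apply: sumR_ext => j; ring.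
Qed.

Lemma sumR_mulA (n p : nat) (f : 'I_p -> R) (g : 'I_p -> 'I_n -> R) (h : 'I_n -> R) :
  sumR (fun a => sumR (fun j => f j * g j a) * h a) =
  sumR (fun j => f j * sumR (fun a => g j a * h a)).
Proof.
rewrite (sumR_ext _ (fun a => sumR (fun j => f j * g j a * h a))); last first.
  by move=> a; rewrite Rmult_comm -sumRZl; apply: sumR_ext => j; ring.
rewrite sumR_exchange; apply: sumR_ext => j.
by rewrite -sumRZl; apply: sumR_ext => a; ring.
Qed.

Lemma mv_mm m n q (B : mat m n) (Y : mat n q) u i :
  mv (mm B Y) u i = mv B (mv Y u) i.
Proof. exact: sumR_mulA. Qed.

Lemma dot_mv_trm n q (d : vec n) (Y : mat n q) u :
  dot (fun a => sumR (fun j => d j * Y j a)) u = dot d (mv Y u).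
Proof. exact: sumR_mulA. Qed.

Lemma mv_homog n q (M : mat n q) (u u' : vec q) s :
  (forall a, u a = s * u' a) -> forall i, mv M u i = s * mv M u' i.
Proof. by move=> uE i; rewrite /mv -sumRZl; apply: sumR_ext => j; rewrite uE; ring. Qed.

Lemma dot_homog n (y u u' : vec n) s :
  (forall a, u a = s * u' a) -> dot y u = s * dot y u'.
Proof. by move=> uE; rewrite /dot -sumRZl; apply: sumR_ext => j; rewrite uE; ring. Qed.

Lemma mvB n q (M N : mat n q) u i :
  mv (fun i j => M i j - N i j) u i = mv M u i - mv N u i.
Proof. by rewrite /mv -sumRB; apply: sumR_ext => j /=; ring. Qed.

Lemma quad_double n (M : mat n n) z :
  quad M z = sumR (fun i => sumR (fun j => z i * M i j * z j)).
Proof. by apply: sumR_ext => i; rewrite -sumRZl; apply: sumR_ext => j; ring. Qed.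

Lemma split_lshift n p (a : 'I_n) : split (lshift p a) = inl a.
Proof. exact: (unsplitK (inl a)). Qed.

Lemma split_rshift n p (b : 'I_p) : split (rshift n b) = inr b.
Proof. exact: (unsplitK (inr b)). Qed.

Section Blocks.
Variables m k : nat.

Definition lpart (z : vec (k + m)) : vec k := fun a => z (lshift m a).
Definition rpart (z : vec (k + m)) : vec m := fun b => z (rshift k b).
Definition joinv (u : vec k) (w : vec m) : vec (k + m) :=
  fun i => match split i with inl a => u a | inr b => w b end.

Lemma lpart_joinv u w : lpart (joinv u w) = u.
Proof. by apply: functional_extensionality => a; rewrite /lpart /joinv split_lshift. Qed.

Lemma rpart_joinv u w : rpart (joinv u w) = w.
Proof. by apply: functional_extensionality => b; rewrite /rpart /joinv split_rshift. Qed.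

Lemma quad_block (M : mat (k + m) (k + m)) z :
  let u := lpart z in let w := rpart z in
  quad M z =
    sumR (fun a => sumR (fun a' => u a * M (lshift m a) (lshift m a') * u a'))
  + sumR (fun b => sumR (fun a =>
      w b * (M (lshift m a) (rshift k b) + M (rshift k b) (lshift m a)) * u a))
  + sumR (fun b => sumR (fun b' => w b * M (rshift k b) (rshift k b') * w b')).
Proof.
move=> u w; rewrite quad_double sumR_split_ord.
under sumR_ext => a do rewrite sumR_split_ord.
under [X in _ + X]sumR_ext => b do rewrite sumR_split_ord.
rewrite !sumRD [X in _ + X + _]sumR_exchange.
have -> : forall a b c e, a + b + (c + e) = a + (b + c) + e by move=> *; ring.
by rewrite -sumR2D /u /w /lpart /rpart; congr (_ + _ + _); do 2!apply: sumR_ext => ? /=; ring.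
Qed.

End Blocks.

Section AffBarMatrix.
Variables (m n1 n2 k : nat) (A : mat m n1) (B : mat m n2) (d : vec n2) (F : mat m k).
Variables (x : vec n1) (lam : R) (Y : mat n2 k).

Definition affbar_mat : mat (k + m) (k + m) := fun i j =>
  lam * @g1g1T m k i j - / 2 * Gmat A F x i j + / 2 * Hmat B d Y i j.

Definition slack (u : vec k) (b : 'I_m) : R :=
  mv A x b + mv B (mv Y u) b - mv F u b.

Lemma mv_Wmat u b : mv (Wmat A F x) u b = mv F u b - mv A x b * dot (@e1 k) u.
Proof.
rewrite /mv /Wmat /dot -sumRZl -sumRB.
by apply: sumR_ext => a /=; rewrite /mv; ring.
Qed.

Lemma quad_affbar_mat (z : vec (k + m)) :
  let u := lpart z in let s := dot (@e1 k) u in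
  quad affbar_mat z = lam * s * s - s * dot d (mv Y u) +
    sumR (fun b => rpart z b * (mv A x b * s + mv B (mv Y u) b - mv F u b)).
Proof.
move=> u s; rewrite quad_block /= -/u.
set dY := fun a => sumR (fun j => d j * Y j a).
rewrite (sumR_ext _ (fun a => sumR (fun a' =>
    lam * (e1 a * u a) * (e1 a' * u a') +
    (- / 2 * (e1 a * u a) * (dY a' * u a') + - / 2 * (dY a * u a) * (e1 a' * u a'))))); last first.
  move=> a; apply: sumR_ext => a'.
  by rewrite /affbar_mat /g1g1T /Gmat /Hmat /dY !split_lshift; ring.
rewrite !sumR2D !sumR_outer -/(dot (@e1 k) u) -/s -/(dot dY u) dot_mv_trm.
rewrite [X in _ + X](sumR_ext _ (fun _ => 0)); last first.
  move=> b; rewrite -(sumR0 m); apply: sumR_ext => b'.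
  by rewrite /affbar_mat /g1g1T /Gmat /Hmat !split_rshift; ring.
rewrite sumR0 Rplus_0_r; congr (_ + _); first lra.
apply: sumR_ext => b /=.
have -> : mv A x b * s + mv B (mv Y u) b - mv F u b = mv (mm B Y) u b - mv (Wmat A F x) u b.
  by rewrite mv_Wmat mv_mm -/s; ring.
rewrite -mvB -sumRZl.
apply: sumR_ext => a /=.
by rewrite /affbar_mat /g1g1T /Gmat /Hmat split_lshift split_rshift /trm; field.
Qed.

Lemma quad_affbar_mat_homog (z : vec (k + m)) s u' :
  (forall a, lpart z a = s * u' a) -> dot (@e1 k) u' = 1 ->
  quad affbar_mat z =
  s * (s * (lam - dot d (mv Y u')) + sumR (fun b => rpart z b * slack u' b)).
Proof.
move=> zE u'1; rewrite quad_affbar_mat (dot_homog _ zE) u'1 Rmult_1_r.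
rewrite (dot_homog d (mv_homog Y zE)) Rmult_plus_distr_l -sumRZl.
have HBY := mv_homog B (mv_homog Y zE); have HF := mv_homog F zE.
rewrite (sumR_ext _ (fun b => s * (rpart z b * slack u' b))); last first.
  by move=> b; rewrite HBY HF /slack; ring.
ring.
Qed.

End AffBarMatrix.

Lemma vcone_add n (S : vec n -> Prop) : vconvex S -> vcone S ->
  forall u v, S u -> S v -> S (fun i => u i + v i).
Proof.
move=> convS coneS u v Su Sv.
have Smid := convS u v (/ 2) Su Sv ltac:(lra).
have := coneS _ 2 Smid ltac:(lra).
by congr S; apply: functional_extensionality => i; field.
Qed.

Lemma nonneg_of_ray (D r : R) : (forall T, 0 <= T -> 0 <= D + T * r) -> 0 <= r.
Proof.
move=> ray; case: (Rle_lt_dec 0 r) => // r_lt0.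
have T_ge0 : 0 <= (Rabs D + 1) / - r.
  by apply: Rmult_le_pos; [have := Rabs_pos D | left; apply: Rinv_0_lt_compat]; lra.
have := ray _ T_ge0; have -> : (Rabs D + 1) / - r * r = - (Rabs D + 1) by field; lra.
have := Rle_abs D; lra.
Qed.

Section SlicedCone.
Variables (k : nat) (Uhat : vec k -> Prop).
Hypothesis hk : (0 < k)%N.
Hypothesis hUv : vconvex Uhat.
Hypothesis hUcone : vcone Uhat.
Hypothesis hUpos : forall u, Uhat u -> forall i : 'I_k, val i = 0%N -> 0 <= u i.
Hypothesis hUne : exists u, Uset Uhat u.
Hypothesis hUb : vbounded (Uset Uhat).

Let i0 : 'I_k := Ordinal hk.

Lemma val_eq0 (i : 'I_k) : val i = 0%N -> i = i0.
Proof. by move=> iE; apply: val_inj. Qed.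

Lemma dot_e1 (u : vec k) : dot (@e1 k) u = u i0.
Proof.
rewrite /dot (sumR_delta (j := i0)); first by rewrite /e1 /= Rmult_1_l.
move=> i iN0; rewrite /e1; case: eqP => [iE|_]; last by rewrite Rmult_0_l.
by case: iN0; apply: val_eq0.
Qed.

Lemma Uset_dot_e1 u : Uset Uhat u -> dot (@e1 k) u = 1.
Proof. by move=> [_ u1]; rewrite dot_e1; apply: u1. Qed.

(* U + T u stays in U for every T >= 0, which boundedness of U forbids unless u = 0. *)
Lemma Uhat_eq0 u : Uhat u -> u i0 = 0 -> forall a, u a = 0.
Proof.
move=> Uu u0 a; case: (Req_dec (u a) 0) => // uaN0; exfalso.
case: hUne => v Uv; case: hUb => M bndU.
have ua_gt0 : 0 < Rabs (u a) by apply: Rabs_pos_lt.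
have va_le : Rabs (v a) <= M := bndU v Uv a.
pose T := (M + Rabs (v a) + 1) / Rabs (u a).
have T_ge0 : 0 <= T.
  by apply: Rmult_le_pos; [have := Rabs_pos (v a) | left; apply: Rinv_0_lt_compat]; lra.
have Uvu : Uset Uhat (fun i => v i + T * u i).
  split; first by apply: vcone_add => //; [exact: Uv.1 | exact: hUcone].
  by move=> i /val_eq0 ->; rewrite u0 Uv.2 //; ring.
have := bndU _ Uvu a; have := Rabs_triang_inv (T * u a) (- v a).
rewrite Rabs_Ropp Rabs_mult (Rabs_pos_eq _ T_ge0) /T.
have -> : T * u a - - v a = v a + T * u a by ring.
by rewrite /T Rmult_assoc Rinv_l ?Rmult_1_r; [lra | apply: Rgt_not_eq].
Qed.

Lemma Uhat_scaled_Uset u : Uhat u ->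
  exists u', Uset Uhat u' /\ forall a, u a = u i0 * u' a.
Proof.
move=> Uu; case: (Req_dec (u i0) 0) => [u0|u0N0].
  case: hUne => v Uv; exists v; split => // a.
  by rewrite (Uhat_eq0 Uu u0) u0 Rmult_0_l.
have s_gt0 : 0 < u i0 by have := hUpos Uu (i := i0) erefl; lra.
exists (fun a => / u i0 * u a); split; last by move=> a; field.
split; first by apply: hUcone => //; left; apply: Rinv_0_lt_compat.
by move=> i /val_eq0 ->; field.
Qed.

Section Copositivity.
Variables (m n1 n2 : nat) (A : mat m n1) (B : mat m n2) (d : vec n2) (F : mat m k).
Variables (x : vec n1) (lam : R) (Y : mat n2 k).

Lemma quad_affbar_mat_Uset u w : Uset Uhat u ->
  quad (affbar_mat A B d F x lam Y) (joinv u w) =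
  lam - dot d (mv Y u) + sumR (fun b => w b * slack A B F x Y u b).
Proof.
move=> Uu; rewrite (@quad_affbar_mat_homog _ _ _ _ A B d F x lam Y _ 1 u).
- by rewrite rpart_joinv !Rmult_1_l.
- by move=> a; rewrite lpart_joinv Rmult_1_l.
- exact: Uset_dot_e1.
Qed.

Lemma COP_affbar_mat :
  COP (@UhatRplus m k Uhat) (affbar_mat A B d F x lam Y) <->
  (forall u, Uset Uhat u -> vge (fun i => mv A x i + mv B (mv Y u) i) (mv F u)) /\
  (forall u, Uset Uhat u -> dot d (mv Y u) <= lam).
Proof.
split=> [cop|[feas bnd] z [Uz w_ge0]].
  have cop_U u w : Uset Uhat u -> (forall b, 0 <= w b) ->
      0 <= lam - dot d (mv Y u) + sumR (fun b => w b * slack A B F x Y u b).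
    move=> Uu w_ge0; rewrite -quad_affbar_mat_Uset //; apply: cop; split.
      by change (Uhat (lpart (joinv u w))); rewrite lpart_joinv; exact: Uu.1.
    by move=> b; change (0 <= rpart (joinv u w) b); rewrite rpart_joinv.
  have bnd u : Uset Uhat u -> dot d (mv Y u) <= lam.
    move=> Uu; have := cop_U u (fun _ => 0) Uu (fun _ => Rle_refl 0).
    by rewrite (sumR_ext _ (fun _ => 0)) ?sumR0 => [|b]; [lra | ring].
  split=> // u Uu b /=.
  suff : 0 <= slack A B F x Y u b by rewrite /slack; lra.
  apply: (nonneg_of_ray (D := lam - dot d (mv Y u))) => T T_ge0.
  have := cop_U u (fun b' => if b' == b then T else 0) Uu.
  rewrite (sumR_delta (j := b)) /= ?eqxx; last by move=> i /eqP/negPf ->; ring.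
  by apply=> b'; case: eqP => _; lra.
have [u' [Uu' uE]] := Uhat_scaled_Uset Uz.
rewrite (quad_affbar_mat_homog A B d F x lam Y uE (Uset_dot_e1 Uu')).
have s_ge0 : 0 <= lpart z i0 by apply: hUpos Uz _ _.
apply: Rmult_le_pos => //; apply: Rplus_le_le_0_compat.
  by apply: Rmult_le_pos => //; have := bnd u' Uu'; lra.
apply: sumR_ge0 => b; apply: Rmult_le_pos; first exact: w_ge0.
by have := feas u' Uu' b; rewrite /slack /=; lra.
Qed.

End Copositivity.
End SlicedCone.

Lemma is_inf_equiv (S1 S2 : R -> Prop) :
  (forall v, S2 v -> S1 v) -> (forall v, S1 v -> exists2 v', S2 v' & v' <= v) ->
  forall e, is_inf S1 e <-> is_inf S2 e.
Proof.
move=> S21 S12 [r| |] /=.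
- split=> -[lb glb]; split.
  + by move=> y /S21; apply: lb.
  + move=> r' lb'; apply: glb => y /S12 [v' /lb']; lra.
  + by move=> y /S12 [v' /lb]; lra.
  + by move=> r' lb'; apply: glb => y /S21 /lb'.
- split=> empty y.
  + by move=> /S21; apply: empty.
  + by move=> /S12 [v' /empty].
- split=> unb M; have [y [Sy yM]] := unb M.
  + by have [v' S2v' v'y] := S12 y Sy; exists v'; split => //; lra.
  + by exists y; split => //; apply: S21.
Qed.

Theorem proposition2 (m n1 n2 k : nat) (hk : (0 < k)%N)
  (A : mat m n1) (B : mat m n2) (c : vec n1) (d : vec n2) (F : mat m k)
  (X : vec n1 -> Prop) (Uhat : vec k -> Prop)
  (hXc : vclosed X) (hXv : vconvex X)
  (hUc : vclosed Uhat) (hUv : vconvex Uhat) (hUcone : vcone Uhat)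
  (hUfd : vfull_dim Uhat)
  (hUpos : forall u, Uhat u -> forall i : 'I_k, val i = 0%N -> 0 <= u i)
  (hUne : exists u, Uset Uhat u) (hUcomp : vcompact (Uset Uhat))
  (hA2 : RLP_feasible A B F X Uhat)
  (hA3 : exists r : R, is_inf (RLP_vals A B c d F X Uhat) (Fin r)) :
  forall v : ER,
    is_inf (AffBar_vals A B c d F X Uhat) v <-> is_inf (Aff_vals A B c d F X Uhat) v.
Proof.
have COP_iff x lam Y := COP_affbar_mat hk hUv hUcone hUpos hUne hUcomp.2 A B d F x lam Y.
apply: is_inf_equiv.
  move=> _ [x [Y [s [Xx [feas [lub ->]]]]]]; exists x, s, Y; split=> //; split=> //.
  by apply/COP_iff; split=> // u Uu; apply: lub.1; exists u.
move=> _ [x [lam [Y [Xx [/COP_iff [feas bnd] ->]]]]].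
pose E t := exists u, Uset Uhat u /\ t = dot d (mv Y u).
have E_bnd : bound E by exists lam => _ [u [Uu ->]]; apply: bnd.
have E_ne : exists t, E t by case: hUne => u Uu; exists (dot d (mv Y u)), u.
have [s lub] := completeness E E_bnd E_ne.
exists (dot c x + s); first by exists x, Y, s.
suff : s <= lam by lra.
by apply: lub.2 => _ [u [Uu ->]]; apply: bnd.
Qed.
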